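(* Let $\mathcal{C}$ be a permutation class (resp. polyomino class) and let $\mathcal{M}$ be its canonical $m$-basis. Assume that for every $M\in\mathcal{M}$ there exists a permutation (resp. polyomino) $P$ such that $M\preccurlyeq P$ and $M'\not\preccurlyeq P$ for all $M'\in\mathcal{M}$ with $M'\neq M$. Then $\mathcal{M}$ is a minimal $m$-basis of $\mathcal{C}$, and consequently $\mathcal{C}$ has a unique minimal $m$-basis.
   Context: Binary matrices have entries in $\{0,1\}$; $M'\preccurlyeq M$ (submatrix order) means $M'$ is obtained from $M$ by deleting some rows and/or columns. A permutation $\sigma$ of $\{1,\dots,n\}$ is identified with its permutation matrix ($M_\sigma(i,j)=1$ iff $i=\sigma(j)$); a permutation class is a set of permutations closed under taking submatrices that are permutation matrices. A quasi-permutation matrix is a binary matrix with at most one $1$ per row and column. A polyomino is a finite edge-connected union of unit cells of $\mathbb{Z}^2$ up to translation, identified with the binary matrix of its minimal bounding rectangle ($1$ for cells, $0$ otherwise); a polyomino class is a set of polyominoes closed under taking submatrices that are polyominoes. $Av(\mathcal{M})$ denotes the set of permutations (resp. polyominoes) with no submatrix in $\mathcal{M}$. For a class $\mathcal{C}$, $\mathcal{C}^+$ is the set of binary matrices that are submatrices of some element of $\mathcal{C}$; the canonical $m$-basis of $\mathcal{C}$ is the set of $\preccurlyeq$-minimal quasi-permutation matrices (permutation case), resp. binary matrices (polyomino case), not in $\mathcal{C}^+$. An $m$-basis of $\mathcal{C}$ is an antichain $\mathcal{M}$ with $\mathcal{C}=Av(\mathcal{M})$. A minimal $m$-basis of $\mathcal{C}$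 is an $m$-basis $\mathcal{M}$ such that (1) no strict subset $\mathcal{M}'\subsetneq\mathcal{M}$ satisfies $\mathcal{C}=Av(\mathcal{M}')$, and (2) for every $M\in\mathcal{M}$ and every submatrix $M'\preccurlyeq M$, either $M'=M$ or $\mathcal{C}\neq Av\big((\mathcal{M}\setminus\{M\})\cup\{M'\}\big)$. *)

From mathcomp Require Import all_boot all_order all_algebra all_fingroup.
Set Implicit Arguments. Unset Strict Implicit. Unset Printing Implicit Defensive.

Record bmx := BMx { bm_r : nat; bm_c : nat; bm_m : 'M[bool]_(bm_r, bm_c) }.

(* Submatrix order: M' is obtained from M by deleting rows and/or columns,
   i.e. M' = M restricted to strictly increasing row / column selections. *)
Definition submx (M' M : bmx) : Prop :=
  exists (f : 'I_(bm_r M') -> 'I_(bm_r M)) (g : 'I_(bm_c M') -> 'I_(bm_c M)),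
    (forall i i' : 'I_(bm_r M'), i < i' -> f i < f i')%N /\
    (forall j j' : 'I_(bm_c M'), j < j' -> g j < g j')%N /\
    bm_m M' = mxsub f g (bm_m M).

Notation "M' \preceq M" := (submx M' M) (at level 70).

Definition perm_bmx n (s : 'S_n) : bmx :=
  @BMx n n (\matrix_(i < n, j < n) (i == s j)).

Definition is_perm (M : bmx) : Prop := exists n (s : 'S_n), M = perm_bmx s.

Definition is_quasi_perm (M : bmx) : Prop :=
  (forall i j j', bm_m M i j -> bm_m M i j' -> j = j') /\
  (forall i i' j, bm_m M i j -> bm_m M i' j -> i = i').

Definition is_binary (M : bmx) : Prop := True.

Definition cell_adj r c (x y : 'I_r * 'I_c) : bool :=
  ((x.1 == y.1 :> nat) && ((x.2.+1 == y.2 :> nat) || (y.2.+1 == x.2 :> nat))) ||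
  ((x.2 == y.2 :> nat) && ((x.1.+1 == y.1 :> nat) || (y.1.+1 == x.1 :> nat))).

(* A polyomino, identified with the binary matrix of its minimal bounding
   rectangle: nonempty, every row and every column contains a cell, and the
   set of cells is edge-connected. *)
Definition is_polyomino (M : bmx) : Prop :=
  (0 < bm_r M)%N /\ (0 < bm_c M)%N /\
  (forall i, exists j, bm_m M i j) /\
  (forall j, exists i, bm_m M i j) /\
  (forall x y : 'I_(bm_r M) * 'I_(bm_c M),
     bm_m M x.1 x.2 -> bm_m M y.1 y.2 ->
     connect (fun u v => [&& bm_m M u.1 u.2, bm_m M v.1 v.2 & cell_adj u v]) x y).

(* Generic notions, parametrized by the universe U (permutations, resp.
   polyominoes). Sets of matrices are predicates bmx -> Prop. *)

Definition is_class (U : bmx -> Prop) (C : bmx -> Prop) : Prop :=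
  (forall P, C P -> U P) /\
  (forall P Q, C P -> U Q -> Q \preceq P -> C Q).

Definition cplus (C : bmx -> Prop) (M : bmx) : Prop := exists P, C P /\ M \preceq P.

(* Canonical m-basis: the preceq-minimal matrices of kind K (quasi-permutation
   matrices, resp. all binary matrices) that are not in C^+. *)
Definition canonical_basis (K : bmx -> Prop) (C : bmx -> Prop) (M : bmx) : Prop :=
  K M /\ ~ cplus C M /\
  (forall M', K M' -> ~ cplus C M' -> M' \preceq M -> M' = M).

Definition Av (U : bmx -> Prop) (Ms : bmx -> Prop) (P : bmx) : Prop :=
  U P /\ (forall M, Ms M -> ~ M \preceq P).

Definition same_set (A B : bmx -> Prop) : Prop := forall X, A X <-> B X.

Definition antichain (Ms : bmx -> Prop) : Prop :=
  forall M M', Ms M -> Ms M' -> M \preceq M' -> M = M'.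

Definition m_basis U (C Ms : bmx -> Prop) : Prop :=
  antichain Ms /\ same_set C (Av U Ms).

Definition minimal_m_basis U (C Ms : bmx -> Prop) : Prop :=
  m_basis U C Ms /\
  (forall Ms' : bmx -> Prop,
     (forall X, Ms' X -> Ms X) -> (exists X, Ms X /\ ~ Ms' X) ->
     ~ same_set C (Av U Ms')) /\
  (forall M, Ms M -> forall M', M' \preceq M ->
     M' = M \/ ~ same_set C (Av U (fun X => (Ms X /\ X <> M) \/ X = M'))).

Definition separated U (Ms : bmx -> Prop) : Prop :=
  forall M, Ms M -> exists P, U P /\ M \preceq P /\
    (forall M', Ms M' -> M' <> M -> ~ M' \preceq P).

Definition conclusion U (C Ms : bmx -> Prop) : Prop :=
  minimal_m_basis U C Ms /\
  (exists B, minimal_m_basis U C B /\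
     forall B', minimal_m_basis U C B' -> same_set B' B).

From mathcomp Require Import all_boot all_order all_algebra all_fingroup.
From mathcomp Require Import zify.
From Stdlib Require Import Classical.
Set Implicit Arguments. Unset Strict Implicit.

(* Since a strictly monotone self-map of ['I_n] is the identity, the submatrix
   order is a partial order whose strict part decreases the size; hence every
   matrix outside [C^+] lies above a minimal one, i.e. above an element of the
   canonical basis [Ms], and [C = Av(Ms)].  Any m-basis consists of matrices
   outside [C^+], and in a minimal m-basis each element [N] lies below a
   permutation (resp. polyomino), hence is of the right kind, and cannot be
   replaced by the canonical element below it, so it is canonical.
   Conversely, the separating witness [P] of [X \in Ms] avoids [Ms \ {X}] but
   is not in [C], so no proper subset of [Ms] is an m-basis. *)

Section StrictlyMonotone.

Variables n m : nat.

Definition smono (f : 'I_n -> 'I_m) :=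
  forall i i' : 'I_n, (i < i')%N -> (f i < f i')%N.

Lemma smono_inj f : smono f -> injective f.
Proof.
move=> hf i i' e; case: (ltngtP i i') => [h|h|]; last exact: val_inj.
- by move: (hf _ _ h); rewrite e ltnn.
- by move: (hf _ _ h); rewrite e ltnn.
Qed.

Lemma smono_leq f : smono f -> forall i : 'I_n, (i <= f i)%N.
Proof.
move=> hf; suff H k (i : 'I_n) : nat_of_ord i = k -> (k <= f i)%N by move=> i; exact: H.
elim: k i => [//|k IH] i hi.
have hk : (k < n)%N by have := ltn_ord i; lia.
have := IH (Ordinal hk) erefl.
have : (f (Ordinal hk) < f i)%N by apply: hf; rewrite /= hi.
lia.
Qed.

End StrictlyMonotone.

Lemma smono_id n (f : 'I_n -> 'I_n) : smono f -> forall i, f i = i.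
Proof.
move=> hf i; apply: val_inj => /=.
pose f' j := rev_ord (f (rev_ord j)).
have hf' : smono f'.
  move=> j j' h; rewrite /f' /=.
  have : (rev_ord j' < rev_ord j)%N by rewrite /=; have := ltn_ord j'; lia.
  move/hf; have := ltn_ord (f (rev_ord j)); have := ltn_ord (f (rev_ord j')); lia.
have := smono_leq hf' (rev_ord i); rewrite /f' rev_ordK /=.
have := smono_leq hf i; have := ltn_ord (f i); have := ltn_ord i; lia.
Qed.

Lemma submx_refl A : A \preceq A.
Proof. by exists id, id; do 2 split=> //; apply/matrixP => i j; rewrite mxE. Qed.

Lemma submx_trans A B D : A \preceq B -> B \preceq D -> A \preceq D.
Proof.
case=> f [g [hf [hg eA]]] [f' [g' [hf' [hg' eB]]]].
exists (f' \o f), (g' \o g); split; [|split].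
- by move=> i i' /hf /hf'.
- by move=> i i' /hg /hg'.
- by rewrite eA eB; apply/matrixP => i j; rewrite !mxE.
Qed.

Lemma submx_size A B : A \preceq B -> (bm_r A <= bm_r B)%N /\ (bm_c A <= bm_c B)%N.
Proof.
case=> f [g [hf [hg _]]].
by split; [have := leq_card f (smono_inj hf) | have := leq_card g (smono_inj hg)];
  rewrite !card_ord.
Qed.

Lemma submx_eq_size A B : A \preceq B -> bm_r A = bm_r B -> bm_c A = bm_c B -> A = B.
Proof.
case: A => r c a; case: B => r' c' b /= [f [g [hf [hg /= ->]]]] /= Er Ec.
subst r' c'; congr BMx; apply/matrixP => i j.
by rewrite mxE (smono_id hf) (smono_id hg).
Qed.

Lemma submx_strict_size A B : A \preceq B -> A <> B ->
  (bm_r A + bm_c A < bm_r B + bm_c B)%N.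
Proof.
move=> hAB hne; have [hr hc] := submx_size hAB.
rewrite ltnNge; apply/negP => hle; apply: hne; apply: submx_eq_size => //; lia.
Qed.

Lemma submx_minimal_below (Q : bmx -> Prop) M : Q M ->
  exists2 X, X \preceq M & Q X /\ forall Y, Q Y -> Y \preceq X -> Y = X.
Proof.
move: {2}(bm_r M + bm_c M).+1 (ltnSn (bm_r M + bm_c M)) => k.
elim: k M => [//|k IH] M hk hM.
case: (classic (exists2 Y, Q Y & Y \preceq M /\ Y <> M)).
- case=> Y hY [hYM hne]; have hlt := submx_strict_size hYM hne.
  have [|X hXY hX] := IH Y _ hY; first lia.
  by exists X => //; exact: submx_trans hXY hYM.
- move=> hno; exists M; first exact: submx_refl.
  split=> // Y hY hYM; apply: NNPP => hne; apply: hno; by exists Y.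
Qed.

Section CanonicalBasis.

Variables (U K C : bmx -> Prop).
Hypothesis universe_kind : forall P, U P -> K P.
Hypothesis kind_submx_closed : forall M M', K M -> M' \preceq M -> K M'.
Hypothesis C_class : is_class U C.

Let Ms := canonical_basis K C.

Lemma canonical_basis_below M : K M -> ~ cplus C M -> exists2 X, Ms X & X \preceq M.
Proof.
move=> hK hnc.
have := @submx_minimal_below (fun X => K X /\ ~ cplus C X) M (conj hK hnc).
case=> X hXM [[hXK hXnc] hXmin].
exists X => //; split=> //; split=> // Y hY hYnc; exact: hXmin.
Qed.

Lemma canonical_basis_antichain : antichain Ms.
Proof. by move=> M M' [hK [hnc _]] [_ [_ hmin]]; exact: hmin. Qed.

Lemma class_Av_canonical_basis : same_set C (Av U Ms).
Proof.
case: C_class => hCU hCdown P; split.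
- move=> hP; split; first exact: hCU.
  by move=> M [_ [hnc _]] hle; apply: hnc; exists P.
- move=> [hU hav]; apply: NNPP => hnC.
  have hnc : ~ cplus C P by move=> [Q [hQ hle]]; apply: hnC; exact: hCdown hle.
  by have [X hX hXP] := canonical_basis_below (universe_kind hU) hnc; exact: hav hX hXP.
Qed.

Lemma canonical_basis_m_basis : m_basis U C Ms.
Proof. by split; [exact: canonical_basis_antichain | exact: class_Av_canonical_basis]. Qed.

Lemma class_not_above_canonical P X : C P -> Ms X -> ~ X \preceq P.
Proof. by move=> /class_Av_canonical_basis [_ hav]; exact: hav. Qed.

Lemma canonical_basis_unshrinkable M : Ms M -> forall M', M' \preceq M ->
  M' = M \/ ~ same_set C (Av U (fun X => (Ms X /\ X <> M) \/ X = M')).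
Proof.
move=> [hK [_ hmin]] M' hle; case: (classic (M' = M)) => hne; [by left | right => heq].
have [Q [hQ hQle]] : cplus C M'.
  by apply: NNPP => hnc; apply: hne; exact: hmin (kind_submx_closed hK hle) hnc hle.
by have [_ hav] := (heq Q).1 hQ; exact: hav M' (or_intror erefl) hQle.
Qed.

Hypothesis Ms_separated : separated U Ms.

Lemma separated_Av_not_class (Ms' : bmx -> Prop) X :
  (forall Y, Ms' Y -> Ms Y) -> Ms X -> ~ Ms' X -> exists2 P, Av U Ms' P & ~ C P.
Proof.
move=> hsub hX hnX; have [P [hU [hXP hsep]]] := Ms_separated hX.
exists P; last by move=> hCP; exact: class_not_above_canonical hCP hX hXP.
split=> // Y hY; apply: hsep (hsub _ hY) _ => e; by subst.
Qed.

Lemma canonical_basis_irredundant (Ms' : bmx -> Prop) :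
  (forall X, Ms' X -> Ms X) -> (exists X, Ms X /\ ~ Ms' X) -> ~ same_set C (Av U Ms').
Proof.
move=> hsub [X [hX hnX]] heq.
by have [P hP hnC] := separated_Av_not_class hsub hX hnX; exact/hnC/heq.
Qed.

Lemma canonical_basis_minimal : minimal_m_basis U C Ms.
Proof.
split; first exact: canonical_basis_m_basis.
by split; [exact: canonical_basis_irredundant | exact: canonical_basis_unshrinkable].
Qed.

Section MinimalBasis.

Variable B : bmx -> Prop.
Hypothesis B_minimal : minimal_m_basis U C B.

Let B_Av : same_set C (Av U B) := B_minimal.1.2.

Lemma minimal_basis_not_cplus N : B N -> ~ cplus C N.
Proof. by move=> hN [Q [hQ hle]]; have [_ hav] := (B_Av Q).1 hQ; exact: hav hle. Qed.

(* Removing an element lying below no permutation (resp. polyomino) would not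
   change [Av U B]. *)
Lemma minimal_basis_kind N : B N -> K N.
Proof.
move=> hN; case: (classic (exists P, U P /\ N \preceq P)).
  by move=> [P [hU hle]]; exact: kind_submx_closed (universe_kind hU) hle.
move=> hnone; exfalso; apply: (B_minimal.2.1 (fun X => B X /\ X <> N)).
- by move=> ? [].
- by exists N; split=> // [[_]]; apply.
- move=> P; split.
  + by move/B_Av => [hU hav]; split=> // Y [hY _]; exact: hav.
  + move=> [hU hav]; apply/B_Av; split=> // Y hY hle.
    case: (classic (Y = N)) => e; first by subst Y; apply: hnone; exists P.
    exact: hav (conj hY e) hle.
Qed.

Lemma minimal_basis_replace N X : B N -> Ms X -> X \preceq N ->
  same_set C (Av U (fun Y => (B Y /\ Y <> N) \/ Y = X)).
Proof.
move=> hN hX hXN P; split.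
- move/B_Av => [hU hav]; split=> // Y [[hY _]|->]; first exact: hav.
  by apply: class_not_above_canonical hX; apply/B_Av.
- move=> [hU hav]; apply/B_Av; split=> // Y hY hle.
  case: (classic (Y = N)) => e.
  + by subst Y; apply: (hav X (or_intror erefl)); exact: submx_trans hle.
  + exact: hav (or_introl (conj hY e)) hle.
Qed.

Lemma minimal_basis_sub_canonical N : B N -> Ms N.
Proof.
move=> hN; have [X hX hXN] :=
  canonical_basis_below (minimal_basis_kind hN) (minimal_basis_not_cplus hN).
by case: (B_minimal.2.2 N hN X hXN) => [<- // | []]; exact: minimal_basis_replace.
Qed.

Lemma minimal_basis_canonical : same_set B Ms.
Proof.
move=> X; split; first exact: minimal_basis_sub_canonical.
move=> hX; apply: NNPP => hnX.
have [P hP hnC] := separated_Av_not_class minimal_basis_sub_canonical hX hnX.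
exact/hnC/B_Av.
Qed.

End MinimalBasis.

Lemma canonical_basis_conclusion : conclusion U C Ms.
Proof.
split; first exact: canonical_basis_minimal.
exists Ms; split; first exact: canonical_basis_minimal.
exact: minimal_basis_canonical.
Qed.

End CanonicalBasis.

Lemma perm_quasi_perm P : is_perm P -> is_quasi_perm P.
Proof.
case=> n [s ->]; split=> /= [i j j'|i i' j]; rewrite !mxE.
- by move=> /eqP -> /eqP /perm_inj.
- by move=> /eqP -> /eqP ->.
Qed.

Lemma quasi_perm_submx M M' : is_quasi_perm M -> M' \preceq M -> is_quasi_perm M'.
Proof.
move=> [hrow hcol] [f [g [hf [hg eM]]]]; split.
- by move=> i j j'; rewrite eM !mxE => a b; exact: (smono_inj hg) (hrow _ _ _ a b).
- by move=> i i' j; rewrite eM !mxE => a b; exact: (smono_inj hf) (hcol _ _ _ a b).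
Qed.

Theorem proposition7 :
  (forall C : bmx -> Prop, is_class is_perm C ->
     separated is_perm (canonical_basis is_quasi_perm C) ->
     conclusion is_perm C (canonical_basis is_quasi_perm C)) /\
  (forall C : bmx -> Prop, is_class is_polyomino C ->
     separated is_polyomino (canonical_basis is_binary C) ->
     conclusion is_polyomino C (canonical_basis is_binary C)).
Proof.
split=> C hC hsep; apply: canonical_basis_conclusion => //.
- exact: perm_quasi_perm.
- exact: quasi_perm_submx.
Qed.
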